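(* Let $B\in\mathbb{Z}^{d\times d}$ be nonsingular, let $i_1,\dots,i_d$ be any permutation of $1,\dots,d$, and for $j=1,\dots,d$ let $C^{(j)}=(B_{i_1},\dots,B_{i_j})\in\mathbb{Z}^{d\times j}$. Then $$|\det B|=|\Pi(B)\cap\mathbb{Z}^d|=\prod_{j=1}^d \mathrm{frac}_{C^{(j)}}[B_{i_j}],$$ where $\mathrm{frac}_{C^{(j)}}[B_{i_j}]$ denotes the fractionality of the coordinate of $C^{(j)}$ corresponding to the column $B_{i_j}$ (its last column).
   Context: For $M\in\mathbb{Z}^{d\times j}$ with linearly independent columns, $\Pi(M)=\{Mx:x\in[0,1)^j\}$. For every $b\in\mathbb{Z}^d$ in the real span of the columns of $M$ there is a unique $x\in\mathbb{Q}^j$ with $Mx=b$. The fractionality of a coordinate $i$ of $M$ is the maximum, over all such $b$, of the denominator $z_i\ge1$ of $x_i$ written in lowest terms $x_i=y_i/z_i$ with $\gcd(y_i,z_i)=1$. *)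

From HB Require Import structures.
From mathcomp Require Import all_boot all_order all_algebra all_fingroup.
Set Implicit Arguments. Unset Strict Implicit. Unset Printing Implicit Defensive.
Import Order.TTheory GRing.Theory Num.Theory.
Local Open Scope ring_scope.

Definition inPi (R : realFieldType) (d j : nat) (M : 'M[int]_(d, j))
    (b : 'cV[int]_d) : Prop :=
  exists x : 'cV[R]_j,
    (forall k : 'I_j, 0 <= x k 0 /\ x k 0 < 1) /\
    map_mx (fun z : int => z%:~R) M *m x = map_mx (fun z : int => z%:~R) b.

Definition frac_denom (d j : nat) (M : 'M[int]_(d, j)) (i : 'I_j) (z : int)
    : Prop :=
  exists (b : 'cV[int]_d) (x : 'cV[rat]_j),
    map_mx (fun z : int => z%:~R) M *m x = map_mx (fun z : int => z%:~R) b /\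
    denq (x i 0) = z.

Definition is_fractionality (d j : nat) (M : 'M[int]_(d, j)) (i : 'I_j)
    (z : int) : Prop :=
  frac_denom M i z /\ (forall z', frac_denom M i z' -> z' <= z).

(* C^(j+1) = (B_{s 0}, ..., B_{s j}) for j : 'I_d (0-indexed). *)
Definition Cmat (d : nat) (B : 'M[int]_d) (s : 'S_d) (j : 'I_d)
    : 'M[int]_(d, j.+1) :=
  \matrix_(r < d, c < j.+1) B r (s (widen_ord (ltn_ord j) c)).

From HB Require Import structures.
From mathcomp Require Import all_boot all_order all_algebra all_fingroup zify.
Import Order.TTheory GRing.Theory Num.Theory.
Local Open Scope ring_scope.
Set Implicit Arguments. Unset Strict Implicit. Unset Printing Implicit Defensive.

(* The integer points of Pi(B) are a system of representatives of
   Z^d / B Z^d: v - B floor(B^-1 v) lies in Pi(B), and two points of Pi(B)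
   that differ by a lattice vector coincide. With a Smith normal form
   B = L diag(g) R, the vectors L y with 0 <= y_i < |g_i| are another system
   of representatives, so both have prod |g_i| = |det B| elements.
   For the fractionalities, write the column-permuted B as U T with U
   unimodular and T upper triangular. Multiplying by U on the left does not
   change which rational x give integral values, so C^(j) may be replaced by
   the first j+1 columns of T. Row j of T x = b reads T_jj x_j = b_j, so the
   denominator of x_j divides |T_jj|, and solving T x = e_j attains |T_jj|;
   the product of the |T_jj| is |det B|. *)

Local Notation ratmx A := (map_mx (fun z : int => z%:~R : rat) A).

Lemma ratmx_unit n (A : 'M[int]_n) : \det A != 0 -> ratmx A \in unitmx.
Proof. by move=> dA; rewrite unitmxE det_map_mx unitfE intr_eq0. Qed.

Lemma normr_unit_int (x : int) : x \is a GRing.unit -> `|x| = 1.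
Proof. by case/orP=> /eqP ->. Qed.

Lemma sub_floor_itv (R : archiRealDomainType) (t : R) :
  0 <= t - (Num.floor t)%:~R < 1.
Proof.
have /andP[le_t] := floor_itv t; rewrite intrD mulr1z => lt_t.
by rewrite subr_ge0 le_t ltrBlDl.
Qed.

Section FundamentalCell.

Variables (d : nat) (B : 'M[int]_d).
Hypothesis detB : \det B != 0.

Let W := invmx (ratmx B).

Let WB : W *m ratmx B = 1%:M.
Proof. by rewrite mulVmx // ratmx_unit. Qed.

Definition in_cell (b : 'cV[int]_d) : Prop :=
  forall k, 0 <= (W *m ratmx b) k 0 < 1.

Lemma inPiE (R : realFieldType) b : inPi R B b <-> in_cell b.
Proof.
have toR m n (A : 'M[int]_(m, n)) : map_mx (fun z : int => z%:~R : R) A =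
    map_mx (fun q : rat => ratr q : R) (ratmx A).
  by apply/matrixP=> i j; rewrite !mxE ratr_int.
have unitBR : map_mx (fun z : int => z%:~R : R) B \in unitmx.
  by rewrite toR map_unitmx ratmx_unit.
pose y := map_mx (fun q : rat => ratr q : R) (W *m ratmx b).
have By : map_mx (fun z : int => z%:~R : R) B *m y = map_mx (fun z => z%:~R) b.
  by rewrite !toR -map_mxM mulmxA mulmxV ?ratmx_unit // mul1mx.
have yE k : 0 <= y k 0 < 1 = (0 <= (W *m ratmx b) k 0 < 1).
  by rewrite mxE ler0q -(rmorph1 (ratr : rat -> R)) ltr_rat.
split=> [[x [x01 Bx]] k | b01].
  have xy : x = y by apply: (can_inj (mulKmx unitBR)); rewrite Bx By.
  by rewrite -yE -xy; apply/andP; apply: x01.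
by exists y; split=> // k; apply/andP; rewrite yE.
Qed.

Definition floorv (y : 'cV[rat]_d) : 'cV[int]_d := \col_i Num.floor (y i 0).

Lemma sub_floorvE (y : 'cV[rat]_d) k :
  (y - ratmx (floorv y)) k 0 = y k 0 - (Num.floor (y k 0))%:~R.
Proof. by rewrite !mxE. Qed.

Definition cell_rep (v : 'cV[int]_d) := v - B *m floorv (W *m ratmx v).

Lemma cell_rep_in v : in_cell (cell_rep v).
Proof.
move=> k; rewrite map_mxB map_mxM mulmxBr mulmxA WB mul1mx.
by rewrite (sub_floorvE (W *m ratmx v)) sub_floor_itv.
Qed.

Lemma cell_rep_id b : in_cell b -> cell_rep b = b.
Proof.
move=> b01; rewrite /cell_rep.
suff -> : floorv (W *m ratmx b) = 0 by rewrite mulmx0 subr0.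
apply/matrixP=> i j; rewrite (ord1 j) [LHS]mxE [RHS]mxE.
by apply: floor_def; rewrite add0r b01.
Qed.

Lemma cell_repD v k : cell_rep (v + B *m k) = cell_rep v.
Proof.
rewrite /cell_rep map_mxD map_mxM mulmxDr mulmxA WB mul1mx.
have -> : floorv (W *m ratmx v + ratmx k) = floorv (W *m ratmx v) + k.
  by apply/matrixP=> i j; rewrite !mxE floorDrz ?intr_int // intrKfloor (ord1 j).
by rewrite mulmxDr opprD addrACA subrr addr0.
Qed.

Lemma cell_rep_eq v1 v2 : cell_rep v1 = cell_rep v2 -> exists k, v1 = v2 + B *m k.
Proof.
rewrite /cell_rep => /eqP; rewrite subr_eq => /eqP ->.
exists (floorv (W *m ratmx v1) - floorv (W *m ratmx v2)).
by rewrite mulmxBr addrA addrAC.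
Qed.

End FundamentalCell.

Lemma int_box_eq (g a b z : int) :
  0 <= a < `|g| -> 0 <= b < `|g| -> a = b + g * z -> a = b.
Proof.
move=> /andP[? ?] /andP[? ?] abz; suff z0 : z = 0 by rewrite abz z0 mulr0 addr0.
nia.
Qed.

Section SmithBox.

Variables (d : nat) (B L R : 'M[int]_d) (g : seq int).
Hypotheses (detB : \det B != 0) (unitL : L \in unitmx) (unitR : R \in unitmx).
Let D : 'M[int]_d := \matrix_(i, j) (g`_i *+ (i == j :> nat)).
Hypothesis defB : B = L *m D *m R.

Let D_diag : D = diag_mx (\row_i g`_i).
Proof. by apply/matrixP=> i j; rewrite !mxE. Qed.

Lemma smith_mulmx (z : 'cV[int]_d) i : (D *m z) i 0 = g`_i * z i 0.
Proof. by rewrite D_diag mul_diag_mx !mxE. Qed.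

Lemma smith_norm_det : `|\det B| = \prod_(i < d) `|g`_i|.
Proof.
rewrite defB !det_mulmx D_diag det_diag !normrM normr_prod.
have [uL uR] := (unitL, unitR); rewrite !unitmxE in uL uR.
rewrite (normr_unit_int uL) (normr_unit_int uR) mul1r mulr1.
by apply: eq_bigr => i _; rewrite mxE.
Qed.

Lemma smith_neq0 (i : 'I_d) : g`_i != 0.
Proof.
apply: contra detB => /eqP gi0; rewrite -normr_eq0 smith_norm_det.
by rewrite (bigD1 i) //= gi0 normr0 mul0r.
Qed.

Definition smith_box := {dffun forall i : 'I_d, 'I_(absz g`_i)}.

Definition box_vec (f : smith_box) : 'cV[int]_d := \col_i (f i : nat)%:Z.

Lemma box_vec_itv f i : 0 <= box_vec f i 0 < `|g`_i|.
Proof. by rewrite mxE -abszE ltz_nat ltn_ord. Qed.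

Lemma card_smith_box : #|smith_box| = (\prod_(i < d) absz (g`_i)%R)%N.
Proof.
rewrite card_dep_ffun foldrE big_map big_enum /=.
by apply: eq_bigr => i _; rewrite card_ord.
Qed.

Lemma box_rep_inj : injective (fun f => cell_rep B (L *m box_vec f)).
Proof.
move=> f1 f2 /= /cell_rep_eq [k]; rewrite defB -!mulmxA -mulmxDr.
move=> /(can_inj (mulKmx unitL)) /matrixP f12; apply/ffunP => i; apply: val_inj.
have := f12 i 0; rewrite [fun_of_matrix (_ + _) _ _]mxE smith_mulmx.
by move=> /(int_box_eq (box_vec_itv f1 i) (box_vec_itv f2 i)); rewrite !mxE => -[].
Qed.

Lemma box_rep_surj b : in_cell B b -> exists f, b = cell_rep B (L *m box_vec f).
Proof.
move=> b_in; have [u def_u] : {u | u = invmx L *m b} by eexists.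
have mod_lt (i : 'I_d) : (absz (modz (u i 0%R) (g`_i)%R) < absz (g`_i)%R)%N.
  by rewrite -ltz_nat abszE ger0_norm ?modz_ge0 ?ltz_mod ?smith_neq0.
pose f : smith_box := [ffun i => Ordinal (mod_lt i)].
pose c := \col_i divz (u i 0) g`_i.
have u_div : u = box_vec f + D *m c.
  apply/matrixP=> i j; rewrite (ord1 j) [RHS]mxE smith_mulmx !mxE ffunE /=.
  by rewrite abszE ger0_norm ?modz_ge0 ?smith_neq0 // addrC mulrC -divz_eq.
exists f; rewrite -(cell_rep_id b_in).
rewrite -(cell_repD detB (L *m box_vec f) (invmx R *m c)).
by congr cell_rep; rewrite defB -!mulmxA mulKVmx // -mulmxDr -u_div def_u mulKVmx.
Qed.

End SmithBox.

Lemma lattice_points_cell d (B : 'M[int]_d) : \det B != 0 ->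
  exists S : seq 'cV[int]_d,
    uniq S /\ (forall b, b \in S <-> in_cell B b) /\ `|\det B| = (size S)%:Z.
Proof.
move=> detB; have [L unitL [R unitR [g _ defB]]] := int_Smith_normal_form B.
exists [seq cell_rep B (L *m box_vec f) | f : smith_box d g]; split; [|split].
- by rewrite (map_inj_uniq (box_rep_inj unitL defB)) enum_uniq.
- move=> b; split; first by case/mapP => f _ ->; apply: cell_rep_in.
  by case/(box_rep_surj detB unitL unitR defB) => f ->; apply: map_f; rewrite mem_enum.
- rewrite size_map -cardE card_smith_box (smith_norm_det unitL unitR defB).
  rewrite (big_morph Posz PoszM (erefl (Posz 1%N))).
  by apply: eq_bigr => i _; rewrite abszE.
Qed.

(* [is_trig_mx] means lower triangular, so [T] upper triangular is [is_trig_mx T^T].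
   The first column is cleared below its top entry by its Smith normal form. *)
Lemma int_unimodular_trig n (A : 'M[int]_n) :
  exists2 U, U \in unitmx & exists2 T, is_trig_mx T^T & A = U *m T.
Proof.
elim: n A => [|n IHn] A.
  exists 1%:M; first exact: unitmx1.
  by exists A; [apply/is_trig_mxP => -[] | rewrite mul1mx].
have [L unitL [R _ [g _ defA1]]] := int_Smith_normal_form (@lsubmx _ (1 + n) 1 n A).
pose A' : 'M[int]_(1 + n) := invmx L *m A.
have dlA' : dlsubmx A' = 0.
  apply/matrixP => i j; rewrite (ord1 j) [RHS]mxE.
  have -> : dlsubmx A' i 0 = (invmx L *m @lsubmx _ (1 + n) 1 n A) (rshift 1 i) 0.
    by rewrite !mxE; apply: eq_bigr => k _; rewrite !mxE.
  by rewrite defA1 mulmxA mulKmx // mxE big_ord1 !mxE mulr0n mul0r.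
have [U' unitU' [T' trigT' defA']] := IHn (drsubmx A').
exists (L *m block_mx 1%:M 0 0 U').
  by rewrite unitmx_mul unitL unitmxE (@det_ublock _ 1 n) det1 mul1r -unitmxE.
exists (block_mx (ulsubmx A') (ursubmx A') 0 T').
  rewrite (@tr_block_mx _ 1 n 1 n) trmx0 (@is_trig_block_mx _ 1 n 1 n) //.
  by rewrite eqxx mx11_is_trig.
rewrite -mulmxA (@mulmx_block _ 1 n 1 n 1 n) !mul1mx !mul0mx !mulmx0 !addr0 add0r.
by rewrite -defA' -dlA' submxK mulKVmx.
Qed.

Lemma frac_denom_unit_mull d j (U : 'M[int]_d) (M : 'M[int]_(d, j)) i z :
  U \in unitmx -> frac_denom (U *m M) i z <-> frac_denom M i z.
Proof.
move=> unitU; split=> -[b [x [Mx xi]]]; last first.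
  by exists (U *m b), x; rewrite !map_mxM -mulmxA Mx.
exists (invmx U *m b), x; split=> //.
by rewrite map_mxM -Mx map_mxM !mulmxA -map_mxM mulVmx // map_mx1 mul1mx.
Qed.

Lemma is_fractionality_unit_mull d j (U : 'M[int]_d) (M : 'M[int]_(d, j)) i z :
  U \in unitmx -> is_fractionality (U *m M) i z <-> is_fractionality M i z.
Proof.
move=> unitU; have frac_UM := frac_denom_unit_mull M _ _ unitU.
split=> -[Mz Mmax]; split=> [|z' Mz']; by [apply/frac_UM | apply/Mmax/frac_UM].
Qed.

Lemma denq_le_mul_int (q : rat) (t m : int) :
  t != 0 -> t%:~R * q = m%:~R -> denq q <= `|t|.
Proof.
move=> t0 tq.
have tnum : t * numq q = m * denq q.
  by apply/eqP; rewrite -(eqr_int rat) !intrM numqE mulrA tq.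
have : (`|denq q| %| `|numq q| * `|t|)%N.
  by rewrite mulnC -abszM tnum abszM dvdn_mull.
rewrite Gauss_dvdr 1?coprime_sym ?coprime_num_den // => /dvdn_leq.
by rewrite absz_gt0 t0 -lez_nat absz_denq abszE => /(_ isT).
Qed.

Section TriangularLastColumn.

Variables (n : nat) (T : 'M[int]_n) (j : 'I_n).
Hypotheses (trigT : is_trig_mx T^T) (diagT : forall i, T i i != 0).

Let w : 'I_j.+1 -> 'I_n := widen_ord (ltn_ord j).
Let Tj : 'M[int]_(n, j.+1) := colsub w T.

Let T_lower (r c : 'I_n) : (c < r)%N -> T r c = 0.
Proof. by move=> cr; have /is_trig_mxP/(_ c r cr) := trigT; rewrite mxE. Qed.

Let w_max : w ord_max = j. Proof. exact: val_inj. Qed.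

Lemma colsub_trig_row_last (x : 'cV[rat]_j.+1) :
  (ratmx Tj *m x) j 0 = (T j j)%:~R * x ord_max 0.
Proof.
rewrite mxE (bigD1 ord_max) //= big1 ?addr0 => [|c /negbTE c_max].
  by rewrite !mxE w_max.
rewrite !mxE T_lower ?mul0r //= ltn_neqAle -ltnS ltn_ord andbT.
by rewrite -(inj_eq val_inj) in c_max; rewrite c_max.
Qed.

Lemma colsub_trig_solve_delta : exists x : 'cV[rat]_j.+1,
  ratmx Tj *m x = ratmx (delta_mx j 0) /\ x ord_max 0 = (T j j)%:~R^-1.
Proof.
pose Tjj : 'M[int]_j.+1 := rowsub w Tj.
have row_Tj (x : 'cV[rat]_j.+1) a : (ratmx Tj *m x) (w a) 0 = (ratmx Tjj *m x) a 0.
  by rewrite !mxE; apply: eq_bigr => k _; rewrite !mxE.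
have unitTjj : ratmx Tjj \in unitmx.
  rewrite ratmx_unit // -det_tr det_trig; first by apply/prodf_neq0 => a _; rewrite !mxE.
  by apply/is_trig_mxP => a c ac; rewrite !mxE T_lower.
pose x : 'cV[rat]_j.+1 := invmx (ratmx Tjj) *m delta_mx ord_max 0.
have Tjj_x : ratmx Tjj *m x = delta_mx ord_max 0 by rewrite mulKVmx.
have Tj_x : ratmx Tj *m x = ratmx (delta_mx j 0).
  apply/matrixP => r c; rewrite (ord1 c) map_delta_mx.
  have [jr | rj] := ltnP j r.
    rewrite mxE big1 ?mxE => [|a _]; last first.
      by rewrite !mxE T_lower ?mulr0z ?mul0r // (leq_trans (ltn_ord a) jr).
    by case: eqP jr => [->|]; rewrite ?ltnn.
  have -> : r = w (Ordinal (rj : (r < j.+1)%N)) by exact: val_inj.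
  by rewrite row_Tj Tjj_x !mxE.
have Tjj0 : (T j j)%:~R != 0 :> rat by rewrite intr_eq0.
exists x; split=> //; apply: (mulfI Tjj0).
by rewrite -colsub_trig_row_last Tj_x mulfV // !mxE !eqxx.
Qed.

Lemma is_fractionality_trig_last : is_fractionality Tj ord_max `|T j j|.
Proof.
split.
  have [x [Tj_x x_max]] := colsub_trig_solve_delta.
  by exists (delta_mx j 0), x; rewrite x_max denqVz.
move=> z [b [x [Tj_x <-]]]; apply: (denq_le_mul_int (diagT j)).
by rewrite -colsub_trig_row_last Tj_x mxE.
Qed.

End TriangularLastColumn.

Lemma normr_det_col_perm (R : numDomainType) n (s : 'S_n) (A : 'M[R]_n) :
  `|\det (col_perm s A)| = `|\det A|.
Proof. by rewrite col_permE det_mulmx det_perm normrM normrX normrN1 expr1n mulr1. Qed.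

Lemma normr_det_unimodular_trig n (U T : 'M[int]_n) :
  U \in unitmx -> is_trig_mx T^T -> `|\det (U *m T)| = \prod_(i < n) `|T i i|.
Proof.
rewrite unitmxE => unitU trigT; rewrite det_mulmx normrM (normr_unit_int unitU) mul1r.
by rewrite -det_tr det_trig // normr_prod; apply: eq_bigr => i _; rewrite mxE.
Qed.

Theorem mainTheorem4 (R : realFieldType) (d : nat) (B : 'M[int]_d) (s : 'S_d) :
  \det B != 0 ->
  (exists S : seq 'cV[int]_d,
      uniq S /\ (forall b, b \in S <-> inPi R B b) /\
      `|\det B| = (size S)%:Z) /\
  (exists f : 'I_d -> int,
      (forall j : 'I_d, is_fractionality (Cmat B s j) ord_max (f j)) /\
      `|\det B| = \prod_(j < d) f j).
Proof.
move=> detB; split.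
  have [S [uniqS [memS sizeS]]] := lattice_points_cell detB.
  by exists S; split=> //; split=> // b; rewrite memS inPiE.
have [U unitU [T trigT defBs]] := int_unimodular_trig (col_perm s B).
have normB : `|\det B| = \prod_(i < d) `|T i i|.
  by rewrite -(normr_det_col_perm s) defBs normr_det_unimodular_trig.
have diagT i : T i i != 0.
  apply: contra detB => /eqP Tii0; rewrite -normr_eq0 normB.
  by rewrite (bigD1 i) //= Tii0 normr0 mul0r.
exists (fun j => `|T j j|); split=> // j.
have -> : Cmat B s j = U *m colsub (widen_ord (ltn_ord j)) T.
  by rewrite mulmx_colsub -defBs; apply/matrixP => r c; rewrite !mxE.
by apply/is_fractionality_unit_mull/is_fractionality_trig_last.
Qed.
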